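(* For every integer $a\geq 1$, $$\sum_{n\geq 1}\frac{H_n}{(2n+1)^{2a}}=-2\lambda(2a)\ln 2+2a\,\lambda(2a+1)-2\sum_{j=1}^{a-1}\lambda(2j)\lambda(2a+1-2j),$$ where an empty sum equals $0$.
   Context: $H_n=1+\frac12+\cdots+\frac1n$ is the $n$-th harmonic number. For real $s>1$, $\lambda(s)=\sum_{n\geq 1}\frac{1}{(2n-1)^s}=(1-2^{-s})\zeta(s)$. *)

From Stdlib Require Import Reals.
From Coquelicot Require Import Coquelicot.
Open Scope R_scope.

Fixpoint harmonic (n : nat) : R :=
  match n with
  | O => 0
  | S m => harmonic m + / INR (S m)
  end.

(* lambda(s) = sum_{n>=1} 1/(2n-1)^s, here for integer s (s >= 2 used);
   index shifted: n = k+1, 2n-1 = 2k+1. *)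
Definition dirichlet_lambda (s : nat) : R :=
  Series (fun k : nat => / (2 * INR k + 1) ^ s).

From Stdlib Require Import Reals Lra Lia.
From Coquelicot Require Import Coquelicot.
Open Scope R_scope.

(* Write [u_n = oddR n = 2 n + 1] and [L_q(N) = lambda_sum q N = sum_(i<N) u_i^-q].
   Since [u_n - u_i = 2 (n - i)], [H_n = sum_(i<n) 2 / (u_n - u_i)], and the partial fraction decomposition of
   [1 / ((u_n - u_i) u_n^(2a))] turns the N-th partial sum of the series into a finite
   identity. In it, the sums [sum_(n<N) L_p(n) / u_n^q] pair up through
   [L_p(N) L_q(N) = sum_(n<N) (L_q(n) / u_n^p + L_p(n) / u_n^q + u_n^-(p+q))] into products
   of partial lambda sums, and what is left is [sum_(i<N) u_i^-2a (H_(N-1-i) / 2 - L_1(N))],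
   which tends to [- ln 2 * lambda(2a)] because [H_(2M+1) - H_M -> ln 2]. *)

(* [psum f n = f 0 + ... + f (n - 1)]; Coquelicot's [sum_n f n] also includes [f n]. *)
Fixpoint psum (f : nat -> R) (n : nat) : R :=
  match n with O => 0 | S m => psum f m + f m end.

Lemma psum_ext f g n : (forall i, (i < n)%nat -> f i = g i) -> psum f n = psum g n.
Proof.
  induction n as [|n IH]; intros Hfg; simpl; [reflexivity|].
  rewrite IH, Hfg; [reflexivity|lia|intros; apply Hfg; lia].
Qed.

Lemma psum_plus f g n : psum (fun i => f i + g i) n = psum f n + psum g n.
Proof. induction n as [|n IH]; simpl; [|rewrite IH]; lra. Qed.

Lemma psum_minus f g n : psum (fun i => f i - g i) n = psum f n - psum g n.
Proof. induction n as [|n IH]; simpl; [|rewrite IH]; lra. Qed.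

Lemma psum_scal c f n : psum (fun i => c * f i) n = c * psum f n.
Proof. induction n as [|n IH]; simpl; [|rewrite IH]; lra. Qed.

Lemma psum_const c n : psum (fun _ => c) n = INR n * c.
Proof. induction n as [|n IH]; simpl psum; [simpl; lra|rewrite IH, S_INR; lra]. Qed.

Lemma psum_Sl f n : psum f (S n) = f O + psum (fun i => f (S i)) n.
Proof. induction n as [|n IH]; simpl in *; [|rewrite IH]; lra. Qed.

Lemma psum_le f g n : (forall i, (i < n)%nat -> f i <= g i) -> psum f n <= psum g n.
Proof.
  induction n as [|n IH]; intros Hfg; simpl; [lra|].
  pose proof (Hfg n ltac:(lia)); pose proof (IH ltac:(intros; apply Hfg; lia)); lra.
Qed.

Lemma psum_nonneg f n : (forall i, (i < n)%nat -> 0 <= f i) -> 0 <= psum f n.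
Proof.
  intros Hf; replace 0 with (psum (fun _ => 0) n) by (rewrite psum_const; lra).
  now apply psum_le.
Qed.

Lemma Rabs_psum_le f n : Rabs (psum f n) <= psum (fun i => Rabs (f i)) n.
Proof.
  induction n as [|n IH]; simpl; [rewrite Rabs_R0; lra|].
  eapply Rle_trans; [apply Rabs_triang|lra].
Qed.

Lemma psum_comm (f : nat -> nat -> R) n m :
  psum (fun i => psum (fun j => f i j) m) n = psum (fun j => psum (fun i => f i j) n) m.
Proof.
  induction n as [|n IH]; simpl; [rewrite psum_const; lra|].
  now rewrite IH, psum_plus.
Qed.

Lemma psum_rev f n : psum f n = psum (fun i => f (n - 1 - i)%nat) n.
Proof.
  revert f; induction n as [|n IH]; intros f; [reflexivity|].
  change (psum f (S n)) with (psum f n + f n).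
  rewrite (psum_Sl (fun i => f (S n - 1 - i)%nat)), IH, Rplus_comm.
  replace (S n - 1 - 0)%nat with n by lia.
  f_equal; apply psum_ext; intros; f_equal; lia.
Qed.

Lemma psum_double f k :
  psum f (2 * k) = psum (fun j => f (2 * j)%nat + f (2 * k - 1 - 2 * j)%nat) k.
Proof.
  assert (Hsplit : psum f (2 * k) = psum (fun j => f (2 * j)%nat + f (2 * j + 1)%nat) k).
  { induction k as [|k IH]; [reflexivity|].
    replace (2 * S k)%nat with (S (S (2 * k))) by lia.
    cbn [psum]; rewrite IH; replace (S (2 * k)) with (2 * k + 1)%nat by lia; lra. }
  rewrite Hsplit, !psum_plus; f_equal.
  rewrite psum_rev; apply psum_ext; intros; f_equal; lia.
Qed.

Lemma psum_telescope g n : psum (fun i => g i - g (S i)) n = g O - g n.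
Proof. induction n as [|n IH]; simpl; [|rewrite IH]; lra. Qed.

Lemma psum_mul_psum x y N :
  psum x N * psum y N =
  psum (fun n => psum y n * x n + psum x n * y n + x n * y n) N.
Proof. induction N as [|N IH]; simpl; [lra|rewrite <- IH; ring]. Qed.

Lemma sum_n_psum f N : sum_n f N = psum f (S N).
Proof.
  induction N as [|N IH]; [rewrite sum_O; simpl; lra|].
  now rewrite sum_Sn, IH.
Qed.

Lemma is_series_psum f (l : R) : is_lim_seq (psum f) l -> is_series f l.
Proof.
  intros Hl; apply is_lim_seq_incr_1 in Hl.
  enough (Hsum : is_lim_seq (sum_n f) l) by exact Hsum.
  apply (is_lim_seq_ext (fun n => psum f (S n))); [|exact Hl].
  intros; symmetry; apply sum_n_psum.
Qed.

Lemma is_lim_seq_psum (F : nat -> nat -> R) (L : nat -> R) k :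
  (forall j, (j < k)%nat -> is_lim_seq (F j) (L j)) ->
  is_lim_seq (fun N => psum (fun j => F j N) k) (psum L k).
Proof.
  induction k as [|k IH]; intros HF; simpl; [apply is_lim_seq_const|].
  apply is_lim_seq_plus'; [apply IH; intros j Hj|]; apply HF; lia.
Qed.

Lemma harmonic_psum n : harmonic n = psum (fun i => / INR (S i)) n.
Proof. induction n as [|n IH]; cbn [harmonic psum]; [|rewrite IH]; reflexivity. Qed.

Lemma psum_inv_sub_harmonic n : psum (fun i => / INR (n - i)) n = harmonic n.
Proof.
  induction n as [|n IH]; [reflexivity|].
  rewrite psum_Sl, Nat.sub_0_r; cbn [harmonic]; rewrite <- IH, Rplus_comm; reflexivity.
Qed.

Lemma harmonic_nonneg n : 0 <= harmonic n.
Proof.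
  rewrite harmonic_psum; apply psum_nonneg; intros.
  left; apply Rinv_0_lt_compat, lt_0_INR; lia.
Qed.

Lemma ln_1p_le x : -1 < x -> ln (1 + x) <= x.
Proof.
  intros Hx; rewrite <- (ln_exp x) at 2.
  apply ln_le; [lra|apply exp_ineq1_le].
Qed.

Lemma ln_S_sub_le k : (1 <= k)%nat -> ln (INR (S k)) - ln (INR k) <= / INR k.
Proof.
  intros Hk; assert (0 < INR k) by (apply lt_0_INR; lia).
  rewrite <- ln_div by (rewrite ?S_INR; lra).
  replace (INR (S k) / INR k) with (1 + / INR k) by (rewrite S_INR; field; lra).
  apply ln_1p_le; assert (0 < / INR k) by (apply Rinv_0_lt_compat; lra); lra.
Qed.

Lemma ln_S_sub_ge k : (1 <= k)%nat -> / INR (S k) <= ln (INR (S k)) - ln (INR k).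
Proof.
  intros Hk; assert (0 < INR k) by (apply lt_0_INR; lia); rewrite S_INR.
  assert (Hinv : / (INR k + 1) < 1)
    by (rewrite <- Rinv_1; apply Rinv_lt_contravar; lra).
  assert (ln (INR k) - ln (INR k + 1) <= - / (INR k + 1)); [|lra].
  rewrite <- ln_div by lra.
  replace (INR k / (INR k + 1)) with (1 + - / (INR k + 1)) by (field; lra).
  apply ln_1p_le; lra.
Qed.

Lemma ln_sub_le_harmonic_sub m d :
  ln (INR (m + d + 1)) - ln (INR (m + 1)) <= harmonic (m + d) - harmonic m.
Proof.
  induction d as [|d IH]; [rewrite Nat.add_0_r; lra|].
  pose proof (ln_S_sub_le (m + d + 1) ltac:(lia)) as Hstep.
  replace (m + S d)%nat with (S (m + d)) by lia; cbn [harmonic].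
  replace (S (m + d) + 1)%nat with (S (m + d + 1)) by lia.
  replace (m + d + 1)%nat with (S (m + d)) in * by lia; lra.
Qed.

Lemma harmonic_sub_le_ln_sub m d : (1 <= m)%nat ->
  harmonic (m + d) - harmonic m <= ln (INR (m + d)) - ln (INR m).
Proof.
  intros Hm; induction d as [|d IH]; [rewrite Nat.add_0_r; lra|].
  replace (m + S d)%nat with (S (m + d)) by lia; cbn [harmonic].
  pose proof (ln_S_sub_ge (m + d) ltac:(lia)); lra.
Qed.

Lemma harmonic_double_sub_ln2 M :
  0 <= harmonic (2 * M + 1) - harmonic M - ln 2 <= / INR (S M).
Proof.
  assert (Hln : forall k, ln (INR (2 * S k)) = ln 2 + ln (INR (S k))).
  { intros k; rewrite mult_INR, ln_mult by (apply lt_0_INR; lia).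
    now replace (INR 2) with 2 by (simpl; lra). }
  split.
  - pose proof (ln_sub_le_harmonic_sub M (M + 1)) as Hlow.
    replace (M + (M + 1) + 1)%nat with (2 * S M)%nat in Hlow by lia.
    replace (M + (M + 1))%nat with (2 * M + 1)%nat in Hlow by lia.
    replace (M + 1)%nat with (S M) in Hlow by lia.
    rewrite Hln in Hlow; lra.
  - pose proof (harmonic_sub_le_ln_sub (S M) M ltac:(lia)) as Hup.
    replace (S M + M)%nat with (2 * M + 1)%nat in Hup by lia.
    assert (ln (INR (2 * M + 1)) <= ln (INR (2 * S M))).
    { apply ln_le; [apply lt_0_INR; lia|apply le_INR; lia]. }
    rewrite Hln in *; cbn [harmonic] in Hup; lra.
Qed.

Lemma harmonic_le_1_plus_ln n : harmonic (S n) <= 1 + ln (INR (S n)).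
Proof.
  pose proof (harmonic_sub_le_ln_sub 1 n ltac:(lia)) as Hup.
  replace (1 + n)%nat with (S n) in Hup by lia.
  simpl INR in Hup at 2; rewrite ln_1 in Hup; simpl harmonic in Hup at 2; lra.
Qed.

Lemma is_lim_seq_harmonic_div : is_lim_seq (fun N => harmonic N / (2 * INR N + 1)) 0.
Proof.
  assert (Hinf : is_lim_seq (fun n => INR (S n)) p_infty)
    by (apply (is_lim_seq_incr_1 INR), is_lim_seq_INR).
  apply is_lim_seq_incr_1.
  apply is_lim_seq_le_le with (fun _ => 0) (fun n => / INR (S n) + ln (INR (S n)) / INR (S n)).
  - intros n; pose proof (harmonic_nonneg (S n)); pose proof (harmonic_le_1_plus_ln n).
    assert (1 <= INR (S n)) by (rewrite S_INR; pose proof (pos_INR n); lra).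
    split; [apply Rdiv_le_0_compat; lra|].
    apply Rle_trans with (harmonic (S n) / INR (S n)).
    + unfold Rdiv; apply Rmult_le_compat_l; [lra|apply Rinv_le_contravar; lra].
    + replace (/ INR (S n) + ln (INR (S n)) / INR (S n))
        with ((1 + ln (INR (S n))) / INR (S n)) by (field; lra).
      unfold Rdiv; apply Rmult_le_compat_r; [left; apply Rinv_0_lt_compat|]; lra.
  - apply is_lim_seq_const.
  - replace 0 with (0 + 0) by lra; apply is_lim_seq_plus'.
    + exact (is_lim_seq_inv _ _ Hinf ltac:(discriminate)).
    + apply (is_lim_comp_seq (fun y => ln y / y) (fun n => INR (S n)) p_infty 0);
        [apply is_lim_div_ln_p|exists O; intros; discriminate|exact Hinf].
Qed.

Definition oddR (n : nat) : R := 2 * INR n + 1.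

Definition lambda_sum (q N : nat) : R := psum (fun i => / oddR i ^ q) N.

Lemma oddR_ge_1 n : 1 <= oddR n.
Proof. unfold oddR; pose proof (pos_INR n); lra. Qed.

Lemma oddR_pos n : 0 < oddR n.
Proof. pose proof (oddR_ge_1 n); lra. Qed.

Lemma oddR_sub n i : (i <= n)%nat -> oddR n - oddR i = 2 * INR (n - i).
Proof. intros Hin; unfold oddR; rewrite (minus_INR _ _ Hin); lra. Qed.

Lemma lambda_sum_S q N : lambda_sum q (S N) = lambda_sum q N + / oddR N ^ q.
Proof. reflexivity. Qed.

Lemma lambda_sum_mul p q N :
  lambda_sum p N * lambda_sum q N =
  psum (fun n => lambda_sum q n / oddR n ^ p + lambda_sum p n / oddR n ^ q
                 + / oddR n ^ (p + q)) N.
Proof.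
  unfold lambda_sum; rewrite psum_mul_psum.
  apply psum_ext; intros; rewrite pow_add, Rinv_mult; unfold Rdiv; ring.
Qed.

Lemma lambda_sum_1_harmonic M : lambda_sum 1 (S M) = harmonic (2 * M + 1) - harmonic M / 2.
Proof.
  induction M as [|M IH]; [unfold lambda_sum, oddR; simpl; field|].
  rewrite lambda_sum_S, IH; replace (2 * S M + 1)%nat with (S (S (2 * M + 1))) by lia.
  cbn [harmonic]; unfold oddR; rewrite !S_INR, plus_INR, mult_INR; simpl INR.
  pose proof (pos_INR M); field; lra.
Qed.

Lemma lambda_sum_2_le N : lambda_sum 2 N <= 3 / 2.
Proof.
  apply Rle_trans with (psum (fun i => 3 / 2 * (/ oddR i - / oddR (S i))) N).
  - apply psum_le; intros i _.
    assert (Hnext : oddR (S i) = oddR i + 2) by (unfold oddR; rewrite S_INR; lra).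
    pose proof (oddR_ge_1 i).
    rewrite Hnext; apply Rmult_le_reg_r with (oddR i ^ 2 * (oddR i + 2)).
    + apply Rmult_lt_0_compat; [apply pow_lt|]; lra.
    + field_simplify; lra.
  - rewrite psum_scal, psum_telescope.
    pose proof (oddR_pos N); assert (0 < / oddR N) by (apply Rinv_0_lt_compat; lra).
    unfold oddR at 1; simpl INR; rewrite Rmult_0_r, Rplus_0_l, Rinv_1; lra.
Qed.

Lemma is_lim_seq_lambda_sum s : (2 <= s)%nat -> is_lim_seq (lambda_sum s) (dirichlet_lambda s).
Proof.
  intros Hs.
  assert (Hex : ex_finite_lim_seq (lambda_sum s)).
  { apply ex_finite_lim_seq_incr with (3 / 2).
    - intros n; rewrite lambda_sum_S.
      assert (0 < / oddR n ^ s) by (apply Rinv_0_lt_compat, pow_lt, oddR_pos); lra.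
    - intros n; eapply Rle_trans; [|apply (lambda_sum_2_le n)].
      apply psum_le; intros i _; pose proof (oddR_ge_1 i).
      apply Rinv_le_contravar; [apply pow_lt; lra|apply Rle_pow; auto]. }
  destruct Hex as [l Hl].
  replace (dirichlet_lambda s) with l; [exact Hl|].
  symmetry; apply is_series_unique, is_series_psum, Hl.
Qed.

Lemma inv_sub_mul_pow_partial_fraction r x y : x <> 0 -> y <> 0 -> y - x <> 0 ->
  / ((y - x) * y ^ S r) =
  / x ^ S r * (/ (y - x) - / y) - psum (fun m => / (x ^ S m * y ^ (S r - m))) r.
Proof.
  intros Hx Hy Hxy.
  assert (Hpow : forall n, y ^ n <> 0) by (intros; apply pow_nonzero, Hy).
  assert (Hpowx : forall n, x ^ n <> 0) by (intros; apply pow_nonzero, Hx).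
  induction r as [|r IH]; [simpl; field; auto|].
  assert (Hshift : psum (fun m => / (x ^ S m * y ^ (S r - m))) r / y
                   = psum (fun m => / (x ^ S m * y ^ (S (S r) - m))) r).
  { unfold Rdiv; rewrite Rmult_comm, <- psum_scal; apply psum_ext; intros m Hm.
    replace (S (S r) - m)%nat with (S (S r - m)) by lia.
    rewrite <- (tech_pow_Rmult y); field; auto. }
  transitivity (/ ((y - x) * y ^ S r) / y); [simpl; field; auto|].
  rewrite IH; cbn [psum]; replace (S (S r) - r)%nat with 2%nat by lia.
  unfold Rdiv in *; rewrite Rmult_minus_distr_r, Hshift, <- !tech_pow_Rmult.
  simpl pow; field; auto.
Qed.

(* Each term of [H_n = sum_(i<n) 2 / (oddR n - oddR i)] is split by the partial fraction above. *)
Lemma harmonic_div_oddR_pow r n :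
  harmonic n / oddR n ^ S r =
  2 * psum (fun i => / oddR i ^ S r * (/ (oddR n - oddR i) - / oddR n)) n
  - 2 * psum (fun m => lambda_sum (S m) n / oddR n ^ (S r - m)) r.
Proof.
  rewrite <- psum_inv_sub_harmonic; unfold Rdiv; rewrite Rmult_comm, <- psum_scal.
  transitivity (psum (fun i => 2 * (/ oddR i ^ S r * (/ (oddR n - oddR i) - / oddR n))
      - 2 * psum (fun m => / (oddR i ^ S m * oddR n ^ (S r - m))) r) n).
  - apply psum_ext; intros i Hi.
    pose proof (oddR_pos i); pose proof (oddR_pos n).
    assert (0 < INR (n - i)) by (apply lt_0_INR; lia).
    assert (Hgap : 0 < oddR n - oddR i) by (rewrite oddR_sub by lia; lra).
    replace (/ oddR n ^ S r * / INR (n - i))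
      with (2 * / ((oddR n - oddR i) * oddR n ^ S r)).
    + rewrite inv_sub_mul_pow_partial_fraction by lra; ring.
    + rewrite oddR_sub by lia; field; split; [|apply pow_nonzero]; lra.
  - rewrite psum_minus, !psum_scal, psum_comm; do 2 f_equal.
    apply psum_ext; intros m _; unfold lambda_sum.
    rewrite Rmult_comm, <- psum_scal; apply psum_ext; intros i _.
    rewrite Rinv_mult; ring.
Qed.

Lemma psum_psum_inv_oddR_sub (c : nat -> R) N :
  psum (fun n => psum (fun i => c i * (/ (oddR n - oddR i) - / oddR n)) n) N
  = psum (fun i => c i * (harmonic (N - 1 - i) / 2 - lambda_sum 1 N + lambda_sum 1 (S i))) N.
Proof.
  induction N as [|N IH]; [reflexivity|].
  cbn [psum]; rewrite IH, <- psum_plus.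
  replace (S N - 1 - N)%nat with O by lia; rewrite lambda_sum_S, pow_1.
  replace (c N * _) with 0 by (cbn [harmonic]; unfold Rdiv; ring); rewrite Rplus_0_r.
  apply psum_ext; intros i Hi.
  replace (S N - 1 - i)%nat with (S (N - 1 - i)) by lia; cbn [harmonic].
  rewrite oddR_sub by lia; replace (S (N - 1 - i)) with (N - i)%nat by lia.
  assert (0 < INR (N - i)) by (apply lt_0_INR; lia); pose proof (oddR_pos N).
  field; lra.
Qed.

(* Its limit is [- ln 2 * dirichlet_lambda q]: for fixed [i], [H_(N-1-i) / 2 - lambda_sum 1 N]
   tends to [- ln 2]. *)
Definition log2_sum (q N : nat) : R :=
  psum (fun i => / oddR i ^ q * (harmonic (N - 1 - i) / 2 - lambda_sum 1 N)) N.

Lemma psum_harmonic_div_oddR_pow r N :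
  psum (fun n => harmonic n / oddR n ^ S r) N =
  2 * psum (fun i => / oddR i ^ S r *
              (harmonic (N - 1 - i) / 2 - lambda_sum 1 N + lambda_sum 1 (S i))) N
  - 2 * psum (fun m => psum (fun n => lambda_sum (S m) n / oddR n ^ (S r - m)) N) r.
Proof.
  rewrite (psum_ext _ _ _ (fun n _ => harmonic_div_oddR_pow r n)).
  now rewrite psum_minus, !psum_scal, psum_comm, psum_psum_inv_oddR_sub.
Qed.

Lemma psum_inv_oddR_pow_harmonic_sub q N :
  psum (fun i => / oddR i ^ q *
          (harmonic (N - 1 - i) / 2 - lambda_sum 1 N + lambda_sum 1 (S i))) N
  - psum (fun n => lambda_sum 1 n / oddR n ^ q) N
  = log2_sum q N + lambda_sum (q + 1) N.
Proof.
  unfold log2_sum; change (lambda_sum (q + 1) N) with (psum (fun i => / oddR i ^ (q + 1)) N).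
  rewrite <- psum_minus, <- psum_plus.
  apply psum_ext; intros i _; rewrite lambda_sum_S, pow_add, pow_1.
  pose proof (oddR_pos i); field; split; [|apply pow_nonzero]; lra.
Qed.

Lemma psum_lambda_sum_div_sym p q N :
  psum (fun n => lambda_sum p n / oddR n ^ q + lambda_sum q n / oddR n ^ p) N
  = lambda_sum q N * lambda_sum p N - lambda_sum (q + p) N.
Proof.
  rewrite lambda_sum_mul.
  change (lambda_sum (q + p) N) with (psum (fun i => / oddR i ^ (q + p)) N).
  rewrite <- psum_minus; apply psum_ext; intros; ring.
Qed.

Lemma psum_harmonic_div_oddR_pow_even k N :
  psum (fun n => harmonic n / oddR n ^ (2 * k + 2)) N =
  2 * lambda_sum (2 * k + 3) N + 2 * log2_sum (2 * k + 2) N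
  - 2 * psum (fun j => lambda_sum (2 * k + 1 - 2 * j) N * lambda_sum (2 * j + 2) N
                       - lambda_sum (2 * k + 3) N) k.
Proof.
  replace (2 * k + 2)%nat with (S (S (2 * k))) by lia.
  rewrite psum_harmonic_div_oddR_pow, psum_Sl, psum_double, Nat.sub_0_r.
  assert (Hpairs : forall j, (j < k)%nat ->
    psum (fun n => lambda_sum (S (S (2 * j))) n / oddR n ^ (S (S (2 * k)) - S (2 * j))) N
    + psum (fun n => lambda_sum (S (S (2 * k - 1 - 2 * j))) n
                     / oddR n ^ (S (S (2 * k)) - S (2 * k - 1 - 2 * j))) N
    = lambda_sum (2 * k + 1 - 2 * j) N * lambda_sum (2 * j + 2) N - lambda_sum (2 * k + 3) N).
  { intros j Hj.
    replace (S (S (2 * j))) with (2 * j + 2)%nat by lia.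
    replace (S (S (2 * k - 1 - 2 * j))) with (2 * k + 1 - 2 * j)%nat by lia.
    replace (S (S (2 * k)) - S (2 * j))%nat with (2 * k + 1 - 2 * j)%nat by lia.
    replace (S (S (2 * k)) - S (2 * k - 1 - 2 * j))%nat with (2 * j + 2)%nat by lia.
    replace (2 * k + 3)%nat with (2 * k + 1 - 2 * j + (2 * j + 2))%nat by lia.
    rewrite <- psum_lambda_sum_div_sym, <- psum_plus; reflexivity. }
  rewrite (psum_ext _ _ _ Hpairs).
  pose proof (psum_inv_oddR_pow_harmonic_sub (S (S (2 * k))) N) as Hlog.
  replace (S (S (2 * k)) + 1)%nat with (2 * k + 3)%nat in Hlog by lia.
  lra.
Qed.

Lemma lambda_sum_1_add_bound M i :
  0 <= lambda_sum 1 (S M + i) - lambda_sum 1 (S M) <= INR i / oddR (S M).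
Proof.
  induction i as [|i IH]; [rewrite Nat.add_0_r; simpl; lra|].
  rewrite Nat.add_succ_r, lambda_sum_S, pow_1, S_INR.
  assert (0 < / oddR (S M + i)) by apply Rinv_0_lt_compat, oddR_pos.
  assert (/ oddR (S M + i) <= / oddR (S M)).
  { apply Rinv_le_contravar; [apply oddR_pos|].
    unfold oddR; rewrite plus_INR; pose proof (pos_INR i); lra. }
  unfold Rdiv in *; lra.
Qed.

Lemma log2_sum_term_bound i N : (i < N)%nat ->
  Rabs (harmonic (N - 1 - i) / 2 - lambda_sum 1 N + ln 2) <= (1 + INR i) / INR (N - i).
Proof.
  intros Hi; set (M := (N - 1 - i)%nat).
  replace (N - i)%nat with (S M) by (unfold M; lia).
  replace (lambda_sum 1 N) with (lambda_sum 1 (S M + i)) by (f_equal; unfold M; lia).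
  pose proof (lambda_sum_1_harmonic M); pose proof (harmonic_double_sub_ln2 M).
  pose proof (lambda_sum_1_add_bound M i).
  assert (0 < INR (S M)) by (apply lt_0_INR; lia).
  assert (INR i / oddR (S M) <= INR i / INR (S M)).
  { unfold Rdiv; apply Rmult_le_compat_l; [apply pos_INR|].
    apply Rinv_le_contravar; [lra|unfold oddR; pose proof (pos_INR (S M)); lra]. }
  replace ((1 + INR i) / INR (S M)) with (/ INR (S M) + INR i / INR (S M)) by (field; lra).
  apply Rabs_le; lra.
Qed.

Lemma log2_sum_weighted_term_bound q i N : (2 <= q)%nat -> (i < N)%nat ->
  Rabs (/ oddR i ^ q * (harmonic (N - 1 - i) / 2 - lambda_sum 1 N + ln 2))
  <= (2 / oddR i + / INR (N - i)) / (2 * INR N + 1).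
Proof.
  intros Hq Hi; pose proof (log2_sum_term_bound i N Hi).
  pose proof (oddR_ge_1 i).
  assert (0 < INR (N - i)) by (apply lt_0_INR; lia).
  assert (Hweight : 0 < / oddR i ^ q <= / oddR i ^ 2).
  { split; [apply Rinv_0_lt_compat, pow_lt; lra|].
    apply Rinv_le_contravar; [apply pow_lt; lra|apply Rle_pow; auto]. }
  assert (1 + INR i <= oddR i) by (unfold oddR; pose proof (pos_INR i); lra).
  rewrite Rabs_mult, Rabs_pos_eq by lra.
  apply Rle_trans with (/ oddR i ^ 2 * ((1 + INR i) / INR (N - i))).
  { apply Rmult_le_compat; try lra; apply Rabs_pos. }
  apply Rle_trans with (/ (oddR i * INR (N - i))).
  - apply Rmult_le_reg_r with (oddR i * oddR i * INR (N - i)).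
    + apply Rmult_lt_0_compat; [apply Rmult_lt_0_compat|]; lra.
    + simpl pow; field_simplify; lra.
  (* because [oddR i + 2 (N - i) = 2 N + 1] *)
  - right; replace (2 * INR N + 1) with (oddR i + 2 * INR (N - i))
      by (rewrite minus_INR by lia; unfold oddR; lra).
    field; lra.
Qed.

Lemma log2_sum_bound q N : (2 <= q)%nat ->
  Rabs (log2_sum q N + ln 2 * lambda_sum q N) <= 3 * (harmonic N / (2 * INR N + 1)).
Proof.
  intros Hq; unfold log2_sum.
  change (lambda_sum q N) with (psum (fun i => / oddR i ^ q) N).
  rewrite <- psum_scal, <- psum_plus.
  eapply Rle_trans; [apply Rabs_psum_le|].
  assert (HN : 0 < 2 * INR N + 1) by (pose proof (pos_INR N); lra).
  apply Rle_trans with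
    (psum (fun i => / (2 * INR N + 1) * (2 * / oddR i + / INR (N - i))) N).
  { apply psum_le; intros i Hi.
    replace (/ (2 * INR N + 1) * (2 * / oddR i + / INR (N - i)))
      with ((2 / oddR i + / INR (N - i)) / (2 * INR N + 1)) by (unfold Rdiv; ring).
    rewrite <- (log2_sum_weighted_term_bound q i N Hq Hi).
    right; f_equal; ring. }
  rewrite psum_scal, psum_plus, psum_scal, psum_inv_sub_harmonic.
  assert (Hodd : 0 <= psum (fun i => / oddR i) N <= harmonic N).
  { split; [apply psum_nonneg; intros; left; apply Rinv_0_lt_compat, oddR_pos|].
    rewrite harmonic_psum; apply psum_le; intros i _.
    apply Rinv_le_contravar; [apply lt_0_INR; lia|].
    unfold oddR; rewrite S_INR; pose proof (pos_INR i); lra. }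
  unfold Rdiv; rewrite (Rmult_comm (harmonic N)), <- Rmult_assoc, (Rmult_comm 3), Rmult_assoc.
  apply Rmult_le_compat_l; [left; apply Rinv_0_lt_compat|]; lra.
Qed.

Lemma is_lim_seq_log2_sum q : (2 <= q)%nat ->
  is_lim_seq (log2_sum q) (- ln 2 * dirichlet_lambda q).
Proof.
  intros Hq.
  apply is_lim_seq_ext
    with (fun N => (log2_sum q N + ln 2 * lambda_sum q N) + - ln 2 * lambda_sum q N);
    [intros; ring|].
  replace (- ln 2 * dirichlet_lambda q) with (0 + - ln 2 * dirichlet_lambda q) by ring.
  apply is_lim_seq_plus'.
  - apply is_lim_seq_abs_0, is_lim_seq_le_le
      with (fun _ => 0) (fun N => 3 * (harmonic N / (2 * INR N + 1))).
    + intros N; split; [apply Rabs_pos|apply log2_sum_bound, Hq].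
    + apply is_lim_seq_const.
    + replace (Finite 0) with (Rbar_mult 3 0) by (simpl; f_equal; ring).
      apply is_lim_seq_scal_l, is_lim_seq_harmonic_div.
  - apply is_lim_seq_mult'; [apply is_lim_seq_const|apply is_lim_seq_lambda_sum, Hq].
Qed.

Lemma sum_n_even_odd_products (f : nat -> R) k :
  sum_n (fun j => if (1 <=? j)%nat then f (2 * j)%nat * f (2 * k + 3 - 2 * j)%nat else 0) k
  = psum (fun j => f (2 * k + 1 - 2 * j)%nat * f (2 * j + 2)%nat) k.
Proof.
  rewrite sum_n_psum, psum_Sl, Rplus_0_l; apply psum_ext; intros j _; cbn [Nat.leb].
  replace (2 * S j)%nat with (2 * j + 2)%nat by lia.
  replace (2 * k + 3 - (2 * j + 2))%nat with (2 * k + 1 - 2 * j)%nat by lia.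
  apply Rmult_comm.
Qed.

Theorem mainTheorem2 (a : nat) (ha : (1 <= a)%nat) :
  is_series (fun k : nat => harmonic (S k) / (2 * INR (S k) + 1) ^ (2 * a))
    (- 2 * dirichlet_lambda (2 * a) * ln 2
     + 2 * INR a * dirichlet_lambda (2 * a + 1)
     - 2 * sum_n (fun j : nat =>
                    if (1 <=? j)%nat
                    then dirichlet_lambda (2 * j) * dirichlet_lambda (2 * a + 1 - 2 * j)
                    else 0) (a - 1)).
Proof.
  set (lam := dirichlet_lambda).
  destruct a as [|k]; [lia|]; replace (S k - 1)%nat with k by lia.
  replace (2 * S k + 1)%nat with (2 * k + 3)%nat by lia.
  replace (2 * S k)%nat with (2 * k + 2)%nat by lia.
  rewrite sum_n_even_odd_products; apply is_series_psum.
  apply (is_lim_seq_ext (fun N => psum (fun n => harmonic n / oddR n ^ (2 * k + 2)) (S N))).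
  { intros N; rewrite psum_Sl; simpl harmonic; unfold Rdiv at 1.
    rewrite Rmult_0_l, Rplus_0_l; reflexivity. }
  apply (is_lim_seq_incr_1 (fun N => psum (fun n => harmonic n / oddR n ^ (2 * k + 2)) N)).
  apply (is_lim_seq_ext _ _ _ (fun N => eq_sym (psum_harmonic_div_oddR_pow_even k N))).
  replace (- 2 * lam (2 * k + 2)%nat * ln 2 + 2 * INR (S k) * lam (2 * k + 3)%nat
           - 2 * psum (fun j => lam (2 * k + 1 - 2 * j)%nat * lam (2 * j + 2)%nat) k)
    with (2 * lam (2 * k + 3)%nat + 2 * (- ln 2 * lam (2 * k + 2)%nat)
          - 2 * psum (fun j => lam (2 * k + 1 - 2 * j)%nat * lam (2 * j + 2)%nat
                               - lam (2 * k + 3)%nat) k)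
    by (rewrite psum_minus, psum_const, S_INR; ring).
  apply is_lim_seq_minus'; [apply is_lim_seq_plus'|];
    apply is_lim_seq_scal_l with (a := 2) (lu := Finite _).
  - apply is_lim_seq_lambda_sum; lia.
  - apply is_lim_seq_log2_sum; lia.
  - apply is_lim_seq_psum; intros j Hj.
    apply is_lim_seq_minus'; [apply is_lim_seq_mult'|]; apply is_lim_seq_lambda_sum; lia.
Qed.
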